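(* A numerical semigroup $G$ is a $2$-permutation numerical semigroup if and only if $G$ is one of $$G_1=\langle 1,2\rangle=\mathbb{N},\qquad G_2=\langle 2,3\rangle=\{0\}\cup\{x\in\mathbb{N}: x\ge 2\},\qquad G_3=\langle 3,4\rangle=\{0,3,4\}\cup\{x\in\mathbb{N}:x\ge 6\}.$$
   Context: $\mathbb{N}=\{0,1,2,\dots\}$. A numerical semigroup is a submonoid $G$ of $(\mathbb{N},+,0)$ such that $\mathbb{N}\setminus G$ is finite; $\langle S\rangle$ denotes the submonoid of $\mathbb{N}$ generated by $S$. Write the elements of $G$ as $0=g_0<g_1<g_2<\cdots$. For a positive integer $n$, $G$ is called an $n$-permutation numerical semigroup if $G=\langle\{g_1,\dots,g_n\}\rangle$ and, for every $k\in\mathbb{N}$, the $n$-tuple $(g_{kn+1}\bmod n,\dots,g_{kn+n}\bmod n)$ contains exactly one representative of each residue class of $\mathbb{Z}/n\mathbb{Z}$. *)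

From mathcomp Require Import all_boot.
Set Implicit Arguments.
Unset Strict Implicit.
Unset Printing Implicit Defensive.

Definition numerical_semigroup (G : pred nat) : Prop :=
  [/\ G 0,
      (forall x y, G x -> G y -> G (x + y)) &
      exists N, forall x, N <= x -> G x].

Inductive gen (S : seq nat) : nat -> Prop :=
  | gen0 : gen S 0
  | genS : forall s x, s \in S -> gen S x -> gen S (s + x).

Definition cnt (G : pred nat) (x : nat) : nat := count G (iota 0 x).

(* is_kth G k x : x = g_k, the k-th element of G (0-indexed: g_0 = 0 < g_1 < ...) *)
Definition is_kth (G : pred nat) (k x : nat) : bool := G x && (cnt G x == k).

Definition perm_numerical_semigroup (n : nat) (G : pred nat) : Prop :=
  numerical_semigroup G /\
  (exists gs : seq nat,
      [/\ size gs = n,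
          (forall i, i < n -> is_kth G i.+1 (nth 0 gs i)) &
          (forall x, G x <-> gen gs x)]) /\
  (forall k : nat, exists xs : seq nat,
      [/\ size xs = n,
          (forall i, i < n -> is_kth G (k * n + i.+1) (nth 0 xs i)) &
          perm_eq [seq x %% n | x <- xs] (iota 0 n)]).

(* Let a < b be the two smallest nonzero elements of G; they generate G, and
   b <= 2a because 2a is in G.  If b = 2a then a divides every element, so a = 1.
   Otherwise c := b - a is odd (g1 and g2 have opposite parities), and a <= 3
   leaves only <2,3> and <3,4>.  For a >= 4 the elements below 5a are the
   da + jc with j <= d <= 4; sorting them (according to how a compares with 2c
   and 3c, equality being excluded since then c divides G) shows that two later
   pairs (g_{2k+1}, g_{2k+2}) force a and a + c to be both odd, contradicting
   the oddness of c.  Conversely, once a semigroup contains every x >= x0, its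
   n-th element is n plus the number of gaps, so late pairs are consecutive
   integers and only finitely many pairs need checking. *)

From mathcomp Require Import all_boot zify.
Set Implicit Arguments.
Unset Strict Implicit.
Unset Printing Implicit Defensive.

Lemma cntS (G : pred nat) x : cnt G x.+1 = cnt G x + G x.
Proof. by rewrite /cnt -addn1 iotaD count_cat /= addn0. Qed.

Lemma cntD (G : pred nat) x y : cnt G (x + y) = cnt G x + count G (iota x y).
Proof. by rewrite /cnt iotaD count_cat. Qed.

Lemma cnt_ltn (G : pred nat) x y : x < y -> G x -> cnt G x < cnt G y.
Proof.
move=> lt_xy Gx; rewrite -(subnKC lt_xy) cntD cntS Gx; lia.
Qed.

Lemma is_kth_leq (G : pred nat) n x y : is_kth G n x -> G y -> n <= cnt G y -> x <= y.
Proof.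
case/andP=> Gx /eqP cnt_x Gy le_n; rewrite leqNgt; apply/negP => lt_yx.
by have := cnt_ltn lt_yx Gy; lia.
Qed.

Lemma is_kth_ltn (G : pred nat) m n x y :
  is_kth G m x -> is_kth G n y -> m < n -> x < y.
Proof.
move=> /andP[Gx /eqP cnt_x] /andP[Gy /eqP cnt_y] lt_mn.
case: (ltngtP x y) => // [lt_yx | eq_xy]; last by move: cnt_x; rewrite eq_xy; lia.
by have := cnt_ltn lt_yx Gy; lia.
Qed.

Lemma is_kth_inj (G : pred nat) n x y : is_kth G n x -> is_kth G n y -> x = y.
Proof.
move=> /andP[Gx /eqP cnt_x] /andP[Gy /eqP cnt_y].
case: (ltngtP x y) => // lt; [have := cnt_ltn lt Gx | have := cnt_ltn lt Gy]; lia.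
Qed.

Lemma is_kth_next (G : pred nat) n p q :
  is_kth G n p -> p < q -> G q -> (forall x, p < x < q -> ~~ G x) ->
  is_kth G n.+1 q.
Proof.
case/andP=> Gp /eqP cnt_p lt_pq Gq gap; rewrite /is_kth Gq -(subnKC lt_pq) cntD cntS Gp.
rewrite (eq_in_count (a2 := pred0)) => [|x]; first by rewrite count_pred0 cnt_p addn0 addn1 eqxx.
by rewrite mem_iota subnKC // => range_x; apply/negbTE/gap; lia.
Qed.

Lemma is_kth_tail (G : pred nat) x0 n :
  (forall x, x0 <= x -> G x) -> cnt G x0 <= n -> is_kth G n (n + (x0 - cnt G x0)).
Proof.
move=> tail le_n; have le_cnt : cnt G x0 <= x0 by rewrite -[leqRHS](size_iota 0) count_size.
have -> : n + (x0 - cnt G x0) = x0 + (n - cnt G x0) by lia.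
rewrite /is_kth tail ?leq_addr // cntD (eq_in_count (a2 := predT)) ?count_predT ?size_iota.
  by apply/eqP; lia.
by move=> x; rewrite mem_iota => /andP[le_x _]; apply: tail.
Qed.

Lemma gen2P a b x : gen [:: a; b] x <-> exists i j, x = i * a + j * b.
Proof.
split.
- elim=> [|s y s_ab _ [i [j ->]]]; first by exists 0, 0.
  by case/predU1P: s_ab => [->|/predU1P[->|//]]; [exists i.+1, j | exists i, j.+1]; lia.
- have genM s k : s \in [:: a; b] -> gen [:: a; b] (k * s).
    by move=> s_ab; elim: k => [|k IHk]; [exact: gen0 | rewrite mulSn; exact: genS].
  move=> [i [j ->]]; elim: i => [|i IHi]; first exact: genM (mem_last _ _).
  by rewrite mulSn -addnA; apply: genS; rewrite ?mem_head.
Qed.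

Lemma gen12 x : gen [:: 1; 2] x.
Proof. by apply/gen2P; exists x, 0; lia. Qed.

Lemma gen23P x : gen [:: 2; 3] x <-> x != 1.
Proof.
rewrite gen2P; split=> [[i [j ->]]|ne_x1]; first lia.
by exists (x./2 - odd x), (odd x); have := odd_double_half x; lia.
Qed.

Lemma gen34P x : gen [:: 3; 4] x <-> x \notin [:: 1; 2; 5].
Proof.
rewrite gen2P !inE; split=> [[i [j ->]]|x_ok]; first lia.
by exists ((x - 4 * (x %% 3)) %/ 3), (x %% 3); lia.
Qed.

Lemma numerical_semigroup_dvd1 (G : pred nat) m :
  numerical_semigroup G -> (forall y, G y -> m %| y) -> m = 1.
Proof.
case=> _ _ [N GN] dvd_m; apply/eqP; rewrite -dvdn1.
by rewrite -(dvdn_addr _ (dvd_m N (GN N (leqnn N)))) addn1 dvd_m ?GN.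
Qed.

Definition alternates_at (G : pred nat) (k : nat) : Prop :=
  exists u v, [/\ is_kth G k.*2.+1 u, is_kth G k.*2.+2 v & odd u != odd v].

Lemma alternates_atP (G : pred nat) k u v :
  alternates_at G k -> is_kth G k.*2.+1 u -> is_kth G k.*2.+2 v -> odd u != odd v.
Proof.
by case=> u' [v' [ku' kv' odd_uv]] ku kv; rewrite (is_kth_inj ku ku') (is_kth_inj kv kv').
Qed.

Lemma perm_eq_mod2 u v : perm_eq [seq x %% 2 | x <- [:: u; v]] (iota 0 2) = (odd u != odd v).
Proof. by rewrite /= !modn2; case: (odd u); case: (odd v). Qed.

Lemma perm2P (G : pred nat) :
  perm_numerical_semigroup 2 G <->
  [/\ numerical_semigroup G,
      exists a b, [/\ is_kth G 1 a, is_kth G 2 b & forall x, G x <-> gen [:: a; b] x]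
    & forall k, alternates_at G k].
Proof.
have kth_index k i : k * 2 + i.+1 = k.*2 + i.+1 by rewrite muln2.
split.
- case=> G_ns [[gs [size_gs kth_gs genG]] pairs]; split=> //.
    case: gs size_gs kth_gs genG => [|a [|b [|//]]] // _ kth_ab genG.
    by exists a, b; split=> //; [exact: kth_ab 0 _ | exact: kth_ab 1 _].
  move=> k; have [xs [size_xs kth_uv]] := pairs k.
  case: xs size_xs kth_uv => [|u [|v [|//]]] // _ kth_uv.
  rewrite perm_eq_mod2 => odd_uv; exists u, v; split=> //.
    by have := kth_uv 0 isT; rewrite kth_index addn1.
  by have := kth_uv 1 isT; rewrite kth_index addn2.
- case=> G_ns [a [b [kth_a kth_b genG]]] alt; split=> //; split.
    by exists [:: a; b]; split=> // -[|[|//]].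
  move=> k; have [u [v [kth_u kth_v odd_uv]]] := alt k.
  exists [:: u; v]; split=> //; last by rewrite perm_eq_mod2.
  by move=> [|[|//]] _ /=; rewrite kth_index ?addn1 ?addn2.
Qed.

Lemma alternates_at_tail (G : pred nat) x0 k :
  (forall x, x0 <= x -> G x) -> cnt G x0 <= k.*2.+1 -> alternates_at G k.
Proof.
move=> tail le_cnt; exists (k.*2.+1 + (x0 - cnt G x0)), (k.*2.+2 + (x0 - cnt G x0)).
by split; try apply: is_kth_tail => //; lia.
Qed.

Lemma perm2_of_tail (G P : pred nat) a b x0 :
  numerical_semigroup G -> (forall x, G x <-> gen [:: a; b] x) -> G =1 P ->
  is_kth P 1 a -> is_kth P 2 b -> (forall x, x0 <= x -> P x) ->
  (forall k, k.*2.+1 < cnt P x0 -> alternates_at P k) ->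
  perm_numerical_semigroup 2 G.
Proof.
move=> G_ns genG GP kth_a kth_b tail head.
have kthE k x : is_kth G k x = is_kth P k x by rewrite /is_kth /cnt GP (eq_count GP).
apply/perm2P; split=> //; first by exists a, b; rewrite !kthE.
move=> k; have [u [v [kth_u kth_v odd_uv]]] : alternates_at P k.
  by case: (ltnP k.*2.+1 (cnt P x0)) => [/head | /(alternates_at_tail tail)].
by exists u, v; rewrite !kthE.
Qed.

Section LargeFirstGenerator.

Variables (G : pred nat) (a c : nat).
Hypothesis G_ns : numerical_semigroup G.
Hypothesis genG : forall x, G x <-> gen [:: a; a + c] x.
Hypothesis kth_a : is_kth G 1 a.
Hypothesis kth_ac : is_kth G 2 (a + c).
Hypothesis alternates : forall k, alternates_at G k.
Hypothesis a_ge4 : 4 <= a.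
Hypothesis c_lt_a : c < a.

Lemma memG y : G y <-> exists d j, j <= d /\ y = d * a + j * c.
Proof.
rewrite genG gen2P; split=> [[i [j ->]] | [d [j [le_jd ->]]]].
  by exists (i + j), j; split; lia.
by exists (d - j), j; nia.
Qed.

Lemma odd_c : odd c.
Proof. by have := alternates_atP (alternates 0) kth_a kth_ac; lia. Qed.

Lemma a_neq_mulc m : m < 4 -> a != m * c.
Proof.
move=> lt_m4; apply/eqP => def_a.
suff c1 : c = 1 by move: a_ge4; rewrite def_a c1; lia.
apply: (numerical_semigroup_dvd1 G_ns) => y /memG[d [j [_ ->]]].
by rewrite def_a mulnA -mulnDl dvdn_mull.
Qed.

Lemma no_memG_between p q :
  q <= 5 * a -> (forall d j, j <= d < 5 -> ~~ (p < d * a + j * c < q)) ->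
  forall x, p < x < q -> ~~ G x.
Proof.
move=> le_q5a gap x range_x; apply/negP => /memG[d [j [le_jd def_x]]].
have lt_d5 : d < 5 by apply: contraTT range_x; rewrite -leqNgt def_x; nia.
by move: range_x; rewrite def_x; apply/negP/gap; rewrite le_jd.
Qed.

(* Clearing the accumulated [is_kth] facts keeps [lia] fast. *)
Ltac lia_ac :=
  have := odd_c; repeat match goal with k : is_true (is_kth _ _ _) |- _ => clear k end; lia.

Ltac next_kth prev d j :=
  apply: (is_kth_next prev);
  [ lia_ac
  | by apply/memG; exists d, j; split; lia_ac
  | apply: no_memG_between; [lia_ac | move=> [|[|[|[|[|?]]]]] [|[|[|[|[|?]]]]] //=; lia_ac]].

Lemma large_first_generator_absurd : False.
Proof.
have k3 : is_kth G 3 (2 * a) by next_kth kth_ac 2 0.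
have k4 : is_kth G 4 (2 * a + c) by next_kth k3 2 1.
have [lt_a2c | gt_a2c] : a < 2 * c \/ 2 * c < a.
  by have := a_neq_mulc (isT : 2 < 4); lia_ac.
- have k5 : is_kth G 5 (3 * a) by next_kth k4 3 0.
  have k6 : is_kth G 6 (2 * a + 2 * c) by next_kth k5 2 2.
  have k7 : is_kth G 7 (3 * a + c) by next_kth k6 3 1.
  have k8 : is_kth G 8 (4 * a) by next_kth k7 4 0.
  have := alternates_atP (alternates 2) k5 k6.
  have := alternates_atP (alternates 3) k7 k8.
  lia_ac.
- have k5 : is_kth G 5 (2 * a + 2 * c) by next_kth k4 2 2.
  have k6 : is_kth G 6 (3 * a) by next_kth k5 3 0.
  have k7 : is_kth G 7 (3 * a + c) by next_kth k6 3 1.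
  have k8 : is_kth G 8 (3 * a + 2 * c) by next_kth k7 3 2.
  have := alternates_atP (alternates 2) k5 k6.
  have [lt_a3c | gt_a3c] : a < 3 * c \/ 3 * c < a.
    by have := a_neq_mulc (isT : 3 < 4); lia_ac.
  + have k9 : is_kth G 9 (4 * a) by next_kth k8 4 0.
    have k10 : is_kth G 10 (3 * a + 3 * c) by next_kth k9 3 3.
    have := alternates_atP (alternates 4) k9 k10.
    lia_ac.
  + have k9 : is_kth G 9 (3 * a + 3 * c) by next_kth k8 3 3.
    have k10 : is_kth G 10 (4 * a) by next_kth k9 4 0.
    have := alternates_atP (alternates 4) k9 k10.
    lia_ac.
Qed.

End LargeFirstGenerator.

Lemma perm2_generators (G : pred nat) a b :
  numerical_semigroup G -> is_kth G 1 a -> is_kth G 2 b ->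
  (forall x, G x <-> gen [:: a; b] x) -> (forall k, alternates_at G k) ->
  [\/ a = 1 /\ b = 2, a = 2 /\ b = 3 | a = 3 /\ b = 4].
Proof.
move=> G_ns kth_a kth_b genG alternates.
have lt_ab : a < b := is_kth_ltn kth_a kth_b isT.
have a_pos : 0 < a by case: a kth_a {lt_ab genG} => // /andP[].
have le_b2a : b <= 2 * a.
  have G2a : G (2 * a) by apply/genG/gen2P; exists 2, 0; rewrite addn0.
  apply: (is_kth_leq kth_b G2a); case/andP: kth_a => Ga /eqP cnt_a.
  by have := cnt_ltn (_ : a < 2 * a) Ga; lia.
have [lt_b2a | eq_b2a] : b < 2 * a \/ b = 2 * a by lia.
- have odd_ab := alternates_atP (alternates 0) kth_a kth_b.
  have [le_a3 | ge_a4] := leqP a 3.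
    have small : a = 2 /\ b = 3 \/ a = 3 /\ b = 4 by lia.
    by case: small => ?; [constructor 2 | constructor 3].
  rewrite -(subnKC (ltnW lt_ab)) in kth_b genG.
  by case: (large_first_generator_absurd G_ns genG kth_a kth_b alternates ge_a4); lia.
- have a1 : a = 1.
    apply: (numerical_semigroup_dvd1 G_ns) => y /genG/gen2P[i [j ->]].
    by rewrite eq_b2a mulnCA dvdn_add ?dvdn_mull.
  by constructor 1; rewrite eq_b2a a1.
Qed.

Theorem mainTheorem1 (G : pred nat) :
  numerical_semigroup G ->
  (perm_numerical_semigroup 2 G <->
     (forall x, G x <-> gen [:: 1; 2] x) \/
     (forall x, G x <-> gen [:: 2; 3] x) \/
     (forall x, G x <-> gen [:: 3; 4] x)).
Proof.
move=> G_ns; split.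
- case/perm2P=> _ [a [b [kth_a kth_b genG]]] alternates.
  by case: (perm2_generators G_ns kth_a kth_b genG alternates) => -[? ?]; subst;
     [left | right; left | right; right].
- case=> [genG | [genG | genG]].
  + apply: (perm2_of_tail (P := predT) (x0 := 0) G_ns genG) => // x.
    by apply/genG/gen12.
  + apply: (perm2_of_tail (P := fun x => x != 1) (x0 := 2) G_ns genG).
    * by move=> x; apply/idP/idP => [/genG/gen23P | /gen23P/genG].
    * by [].
    * by [].
    * by move=> x le2x; lia.
    * by move=> [|k].
  + apply: (perm2_of_tail (P := fun x => x \notin [:: 1; 2; 5]) (x0 := 6) G_ns genG).
    * by move=> x; apply/idP/idP => [/genG/gen34P | /gen34P/genG].
    * by [].
    * by [].
    * by move=> x le6x; rewrite !inE; lia.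
    * by move=> [|k] //= _; exists 3, 4.
Qed.
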